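(* Let $g(X)=X^r+\sum_{i=0}^{r-1}m_iX^i\in\mathbb{F}_2[X]$ have degree $r\ge 1$, and let $f\in\mathbb{F}_2[X]$ with $\deg f<r$ be the initial load of the Galois-mode LFSR with connection polynomial $g$. Let $(a_k)_{k\ge 0}$ be its output sequence, i.e. $a_k$ is the coefficient of $X^{r-1}$ in $X^kf \bmod g$. Then for every $k\ge 0$, \[ \deg\bigl(X^kf \bmod g\bigr)=r-1-\max\{j\ge 0: a_k=a_{k+1}=\dots=a_{k+j-1}=0\}, \] where the maximum is taken to be $0$ if $a_k=1$.
   Context: The Galois-mode LFSR of length $r$ with connection polynomial $g$ has states $(f_0,\dots,f_{r-1})\in\mathbb{F}_2^r$, identified with $f(X)=\sum_{i=0}^{r-1}f_iX^i$, and transition $(f_0,\dots,f_{r-1})\mapsto(m_0f_{r-1},f_0+m_1f_{r-1},\dots,f_{r-2}+m_{r-1}f_{r-1})$; the state after $k$ steps is $X^kf\bmod g$, and the output at step $k$ is the last coordinate $f_{r-1}$ of the current state. Conventions: $\deg(0)=-\infty$, and the maximum of an unbounded set is $+\infty$. *)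

From HB Require Import structures.
From mathcomp Require Import all_boot all_order all_algebra all_field.
Set Implicit Arguments. Unset Strict Implicit. Unset Printing Implicit Defensive.
Import GRing.Theory.
Local Open Scope ring_scope.

Definition lfsr_state (g f : {poly 'F_2}) (k : nat) : {poly 'F_2} :=
  ('X^k * f) %% g.

Definition lfsr_output (r : nat) (g f : {poly 'F_2}) (k : nat) : 'F_2 :=
  (lfsr_state g f k)`_(r.-1).

Definition zero_run (a : nat -> 'F_2) (k j : nat) : Prop :=
  forall i : nat, (i < j)%N -> a (k + i)%N = 0.

Definition is_max_run (a : nat -> 'F_2) (k M : nat) : Prop :=
  zero_run a k M /\ forall j : nat, zero_run a k j -> (j <= M)%N.

(** While the state [s] of the register has degree below [r - 1], one step is a
    plain multiplication by [X] with no reduction modulo [g]; hence for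
    [i <= r - size s] the state at step [k + i] is [X^i s], whose coefficient of
    [X^(r-1)] is the coefficient of [X^(r-1-i)] in [s].  These outputs vanish for
    [i < r - size s] and equal the leading coefficient of [s] for
    [i = r - size s], so the zero run starting at [k] has length exactly
    [r - size s] = [r - 1 - deg s]. *)

From HB Require Import structures.
From mathcomp Require Import all_boot all_order all_algebra all_field.
From mathcomp Require Import zify.
Import GRing.Theory.
Local Open Scope ring_scope.

Lemma is_max_run_nonzero (a : nat -> 'F_2) (k M : nat) :
  zero_run a k M -> a (k + M)%N != 0 -> is_max_run a k M.
Proof.
move=> runM aM; split=> // j runj; rewrite leqNgt; apply/negP=> ltMj.
by move: aM; rewrite runj ?eqxx.
Qed.

Section LfsrState.

Variables (r : nat) (g f : {poly 'F_2}).
Hypothesis size_g : size g = r.+1.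

Lemma lfsr_stateD (k i : nat) :
  lfsr_state g f (k + i) = ('X^i * lfsr_state g f k) %% g.
Proof. by rewrite /lfsr_state modp_mul exprD mulrA [_ * 'X^i]mulrC. Qed.

Lemma size_lfsr_state (k : nat) : (size (lfsr_state g f k) <= r)%N.
Proof.
have g_neq0 : g != 0 by rewrite -size_poly_eq0 size_g.
by rewrite -ltnS -size_g ltn_modp.
Qed.

Lemma lfsr_state0_run (k : nat) :
  lfsr_state g f k = 0 -> forall j, zero_run (lfsr_output r g f) k j.
Proof.
by move=> s0 j i _; rewrite /lfsr_output lfsr_stateD s0 mulr0 mod0p coef0.
Qed.

Lemma lfsr_stateD_small (k i : nat) :
  (size (lfsr_state g f k) + i <= r)%N ->
  lfsr_state g f (k + i) = 'X^i * lfsr_state g f k.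
Proof.
move=> small; rewrite lfsr_stateD modp_small // size_g ltnS.
by rewrite (leq_trans (size_polyMleq _ _)) // size_polyXn addSn addnC.
Qed.

Lemma lfsr_output_small (k i : nat) :
  lfsr_state g f k != 0 -> (size (lfsr_state g f k) + i <= r)%N ->
  lfsr_output r g f (k + i) = (lfsr_state g f k)`_(r.-1 - i).
Proof.
rewrite -size_poly_eq0 => s_neq0 small.
rewrite /lfsr_output lfsr_stateD_small // coefXnM ifF //; lia.
Qed.

Lemma lfsr_output_zero_run (k : nat) :
  lfsr_state g f k != 0 ->
  zero_run (lfsr_output r g f) k (r - size (lfsr_state g f k)).
Proof.
move=> s_neq0 i lti; have s_le := size_lfsr_state k.
rewrite lfsr_output_small //; last by lia.
(* [nth_default] states [size] at the carrier ['I_2] instead of the ring, and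
   [lia] would treat the two as unrelated atoms; [set] identifies them. *)
apply: nth_default; move: s_le lti; set d := size _; lia.
Qed.

Lemma lfsr_output_run_end (k : nat) :
  lfsr_state g f k != 0 ->
  lfsr_output r g f (k + (r - size (lfsr_state g f k))) != 0.
Proof.
move=> s_neq0; have s_le := size_lfsr_state k.
have s_gt0 : (0 < size (lfsr_state g f k))%N by rewrite size_poly_gt0.
rewrite lfsr_output_small //; last by lia.
have -> : (r.-1 - (r - size (lfsr_state g f k)))%N = (size (lfsr_state g f k)).-1.
  by lia.
by rewrite -lead_coef_eq0 in s_neq0.
Qed.

End LfsrState.

Theorem theorem3 (r : nat) (g f : {poly 'F_2}) :
  (0 < r)%N -> g \is monic -> size g = r.+1 -> (size f <= r)%N ->
  forall k : nat,
    (lfsr_state g f k = 0 /\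
       forall j : nat, zero_run (lfsr_output r g f) k j)
    \/
    (lfsr_state g f k != 0 /\
       exists M : nat, is_max_run (lfsr_output r g f) k M /\
         ((size (lfsr_state g f k))%:Z - 1 = r%:Z - 1 - M%:Z)%R).
Proof.
(* Only [size g = r.+1] matters: reduction modulo [g] bounds every state. *)
move=> _ _ size_g _ k.
have [s0|s_neq0] := eqVneq (lfsr_state g f k) 0.
  by left; split=> //; apply: lfsr_state0_run.
right; split=> //; exists (r - size (lfsr_state g f k))%N; split.
  apply: is_max_run_nonzero.
    exact: lfsr_output_zero_run.
  exact: lfsr_output_run_end.
have := size_lfsr_state _ _ f size_g k; lia.
Qed.
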